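(* Let $G=(V,E)$ be a finite graph satisfying the $CD\psi(n,-K)$ condition for some $n>0$, $K>0$, where $\psi:(0,+\infty)\to\mathbb R$ is a $C^1$ concave function with $\psi'(1)=0$. Let $\sigma\in\mathbb R$ and $c:[0,\infty)\to\mathbb R$ continuous with either ($c\ge0$, $\sigma\le1$) or ($c\le0$, $\sigma\ge1$), and let $u$ be a positive solution of $\partial_tu=\Delta u+c(t)u^\sigma$ on $V$. Then for all vertices and all $t>0$, $$\Gamma^\psi(u)\le\frac{n}{2t}+Kn.$$
   Context: Graphs: $G=(V,E)$ is a connected, locally finite graph; each edge $xy$ carries a weight $w_{xy}>0$ (possibly asymmetric), and $\mu:V\to(0,\infty)$ is a vertex measure; $y\sim x$ means $xy\in E$. Laplacian: $\Delta f(x)=\frac{1}{\mu(x)}\sum_{y\sim x}w_{xy}(f(y)-f(x))$. For $f:V\to(0,\infty)$: $\Delta^\psi f(x)=\Delta\big[\psi\big(\tfrac{f}{f(x)}\big)\big](x)$; $\overline\psi(s)=\psi'(1)(s-1)-(\psi(s)-\psi(1))$, $\Gamma^\psi f=\Delta^{\overline\psi}f$; $(\Omega^\psi f)(x)=\Delta\big[\psi'\big(\tfrac{f}{f(x)}\big)\tfrac{f}{f(x)}\big(\tfrac{\Delta f}{f}-\tfrac{\Delta f(x)}{f(x)}\big)\big](x)$; $2\Gamma_2^\psi(f)=\Omega^\psi f+\frac{\Delta f\,\Delta^\psi f}{f}-\frac{\Delta(f\Delta^\psi f)}{f}$. $CD\psi(n,K)$: for every $f:V\to(0,\infty)$ and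 every vertex, $\Gamma_2^\psi(f)\ge\frac1n(\Delta^\psi f)^2+K\Gamma^\psi(f)$. A positive solution $u:V\times[0,\infty)\to(0,\infty)$ is continuously differentiable in $t$; operators are applied to $u(\cdot,t)$ at each fixed time. *)

From HB Require Import structures.
From mathcomp Require Import all_boot all_order all_algebra.
From mathcomp Require Import all_classical all_reals all_analysis.
Set Implicit Arguments. Unset Strict Implicit. Unset Printing Implicit Defensive.
Import Order.TTheory GRing.Theory Num.Theory numFieldTopology.Exports numFieldNormedType.Exports.
Local Open Scope ring_scope.
Local Open Scope classical_set_scope.

Section Graph.
Variables (R : realType) (V : finType).
(* adjacency relation [adj x y] means "y ~ x", i.e. xy is an edge *)
Variable adj : rel V.
Variable w : V -> V -> R.   (* edge weights w_{xy}, possibly asymmetric *)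
Variable mu : V -> R.

Definition weighted_graph : Prop :=
  [/\ symmetric adj, irreflexive adj,
      (forall x y : V, connect adj x y),
      (forall x y, adj x y -> 0 < w x y) &
      (forall x, 0 < mu x)].

Definition Lap (f : V -> R) (x : V) : R :=
  (mu x)^-1 * \sum_(y | adj x y) w x y * (f y - f x).

Definition Lap_psi (psi : R -> R) (f : V -> R) (x : V) : R :=
  Lap (fun y => psi (f y / f x)) x.

Definition psibar (psi : R -> R) (s : R) : R :=
  derive1 psi 1 * (s - 1) - (psi s - psi 1).

Definition Gamma_psi (psi : R -> R) (f : V -> R) (x : V) : R :=
  Lap_psi (psibar psi) f x.

Definition Omega_psi (psi : R -> R) (f : V -> R) (x : V) : R :=
  Lap (fun y => derive1 psi (f y / f x) * (f y / f x) *
                (Lap f y / f y - Lap f x / f x)) x.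

Definition Gamma2_psi (psi : R -> R) (f : V -> R) (x : V) : R :=
  (Omega_psi psi f x + Lap f x * Lap_psi psi f x / f x
   - Lap (fun y => f y * Lap_psi psi f y) x / f x) / 2.

Definition CDpsi (psi : R -> R) (n K : R) : Prop :=
  forall (f : V -> R), (forall y, 0 < f y) ->
  forall x, Gamma2_psi psi f x >= n^-1 * (Lap_psi psi f x) ^+ 2
                                 + K * Gamma_psi psi f x.
End Graph.

(* psi : (0,+oo) -> R is C^1 and concave (values outside (0,+oo) irrelevant) *)
Definition C1_concave_pos {R : realType} (psi : R -> R) : Prop :=
  [/\ (forall s : R, 0 < s -> derivable psi s 1),
      (forall s : R, 0 < s -> {for s, continuous (fun z : R => derive1 psi z)}) &
      (forall (a b t : R), 0 < a -> 0 < b -> 0 <= t <= 1 ->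
         t * psi a + (1 - t) * psi b <= psi (t * a + (1 - t) * b))].

(* u : V x [0,oo) -> (0,oo), C^1 in t on [0,oo), solving
   d/dt u = Delta u + c(t) u^sigma.  The time derivative is taken for t > 0;
   continuity of u(x,.) on [0,oo) and the equation give the one-sided C^1
   property at t = 0. *)
Definition positive_solution {R : realType} {V : finType} (adj : rel V)
  (w : V -> V -> R) (mu : V -> R) (c : R -> R) (sigma : R)
  (u : V -> R -> R) : Prop :=
  [/\ (forall x t, 0 <= t -> 0 < u x t),
      (forall x, {within `[0, +oo[, continuous (u x)}),
      (forall x t, 0 < t -> derivable (u x) t 1),
      (forall x t, 0 < t -> {for t, continuous (fun z : R => derive1 (u x) z)}) &
      (forall x t, 0 < t ->
         derive1 (u x) t = Lap adj w mu (fun y => u y t) x + c t * (u x t) `^ sigma)].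

From HB Require Import structures.
From mathcomp Require Import all_boot all_order all_algebra.
From mathcomp Require Import all_classical all_reals all_analysis.
From mathcomp Require Import ring lra.
Set Implicit Arguments. Unset Strict Implicit. Unset Printing Implicit Defensive.
Import Order.TTheory GRing.Theory Num.Theory numFieldTopology.Exports numFieldNormedType.Exports.
Local Open Scope ring_scope.
Local Open Scope classical_set_scope.

(* Since psi'(1) = 0, Gamma^psi = - Delta^psi, and along the flow
   d/dt Gamma^psi(u) = - Omega^psi(u) - Q, where Q comes from the reaction term
   c(t) u^sigma.  Q >= 0: by concavity psi'(u_y / u_x) has the sign of u_x - u_y,
   and so does c(t) (u_y^(sigma-1) - u_x^(sigma-1)) under either sign condition.
   Let (y0, t0) maximise (t - eps) Gamma^psi(u) over V x [eps, T].  Maximality in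
   space gives 2 Gamma_2^psi <= Omega^psi at (y0, t0), so CDpsi(n, -K) yields
   Omega^psi >= (2/n) G^2 - 2 K G for G = Gamma^psi(u)(y0, t0); maximality in time
   gives (t0 - eps) Omega^psi <= G.  This Riccati inequality bounds (t0 - eps) G
   by n/2 + K n (t0 - eps), hence (T - eps) Gamma^psi(u)(x, T) <= n/2 + K n (T - eps),
   and letting eps -> 0 gives the estimate. *)

Section RealAnalysis.
Variable R : realType.
Implicit Types (f psi : R -> R) (a b d m : R).

Lemma derive1_ge_right_slopes f a m d :
  derivable f a 1 -> 0 < d ->
  (forall h, 0 < h -> h < d -> m * h <= f (a + h) - f a) -> m <= derive1 f a.
Proof.
move=> df d0 slope.
rewrite derive1E /derive cvg_at_rightE //.
apply: limr_ge.
  move: df => /cvg_ex [l hl]; apply/cvg_ex; exists l.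
  move=> A /hl /nbhs_ballP [_ /posnumP[e] xe_A].
  by exists e%:num => //= y xe_y; rewrite lt_def => /andP [xney _]; apply: xe_A.
near=> h.
have h0 : 0 < h by near: h; exact: nbhs_right_gt.
have hd : h < d by near: h; exact: nbhs_right_lt.
rewrite /= scaler1 addrC ler_pdivlMl // mulrC addrC (addrC h).
exact: slope.
Unshelve. all: end_near. Qed.

Lemma derive1_le_left_slopes f a m d :
  derivable f a 1 -> 0 < d ->
  (forall h, - d < h -> h < 0 -> m * h <= f (a + h) - f a) -> derive1 f a <= m.
Proof.
move=> df d0 slope.
rewrite derive1E /derive cvg_at_leftE //.
apply: limr_le.
  move: df => /cvg_ex [l hl]; apply/cvg_ex; exists l.
  move=> A /hl /nbhs_ballP [_ /posnumP[e] xe_A].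
  exists e%:num => //= y xe_y; rewrite lt_def => /andP [xney _].
  by apply: xe_A => //; rewrite eq_sym.
near=> h.
have h0 : h < 0 by near: h; exact: nbhs_left_lt.
have hd : - d < h by near: h; apply: nbhs_left_gt; rewrite oppr_lt0.
rewrite /= scaler1 ler_ndivrMl // mulrC addrC (addrC h) addrC.
exact: slope.
Unshelve. all: end_near. Qed.

Lemma is_derive_ge0_at_left_max f a (t df : R) :
  is_derive t 1 f df -> a < t -> (forall s, a <= s <= t -> f s <= f t) -> 0 <= df.
Proof.
move=> fdf at0 fmax.
have [Nf Nf_val] := is_deriveN fdf.
rewrite -oppr_le0 -Nf_val -derive1E.
apply: (derive1_le_left_slopes Nf (_ : 0 < t - a)); first by rewrite subr_gt0.
move=> h ha h0; rewrite mul0r /= opprK addrC subr_ge0.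
by apply: fmax; apply/andP; split; lra.
Qed.

Definition concave_pos psi := forall a b t, 0 < a -> 0 < b -> 0 <= t <= 1 ->
  t * psi a + (1 - t) * psi b <= psi (t * a + (1 - t) * b).

Lemma concave_le_tangent psi a b : concave_pos psi -> derivable psi a 1 ->
  0 < a -> 0 < b -> psi b <= psi a + derive1 psi a * (b - a).
Proof.
move=> cv da a0 b0.
have combination : b - a != 0 -> forall h, h / (b - a) * b + (1 - h / (b - a)) * a = a + h.
  by move=> ? h; field.
set m := (psi b - psi a) / (b - a).
have chord h : b - a != 0 -> 0 <= h / (b - a) <= 1 -> m * h <= psi (a + h) - psi a.
  move=> bna t01; have := cv b a _ b0 a0 t01; rewrite combination //.
  suff -> : m * h = h / (b - a) * psi b + (1 - h / (b - a)) * psi a - psi a.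
    by rewrite lerD2r.
  by rewrite /m; field.
have [ab|ba|<-] := ltgtP a b; last by rewrite subrr mulr0 addr0.
- have dab : 0 < b - a by rewrite subr_gt0.
  have : m <= derive1 psi a.
    apply: (derive1_ge_right_slopes da dab) => h h0 hd; apply: chord; first by rewrite gt_eqF.
    apply/andP; split; first by rewrite divr_ge0 // ltW.
    by rewrite ler_pdivrMr // mul1r ltW.
  by rewrite /m ler_pdivrMr // => slope_le; lra.
- have dab : 0 < a - b by rewrite subr_gt0.
  have nab : b - a < 0 by rewrite subr_lt0.
  have : derive1 psi a <= m.
    apply: (derive1_le_left_slopes da dab) => h hd h0; apply: chord; first by rewrite lt_eqF.
    apply/andP; split; first by rewrite ler_ndivlMr // mul0r ltW.
    by rewrite ler_ndivrMr // mul1r; lra.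
  by rewrite /m ler_ndivlMr // => slope_ge; lra.
Qed.

Lemma concave_derive1_sign psi q : concave_pos psi -> derive1 psi 1 = 0 ->
  derivable psi q 1 -> derivable psi 1 1 -> 0 < q -> 0 <= derive1 psi q * (1 - q).
Proof.
move=> cv d1 dq d_one q0.
have := concave_le_tangent cv dq q0 ltr01.
have := concave_le_tangent cv d_one ltr01 q0.
by rewrite d1 mul0r addr0; lra.
Qed.

Lemma powR_div_self (a s : R) : 0 < a -> a `^ s / a = expR ((s - 1) * ln a).
Proof. by move=> a0; rewrite /powR gt_eqF // mulrBl mul1r expRB lnK. Qed.

Lemma reaction_rate_sign (k s a b : R) :
  (0 <= k /\ s <= 1 \/ k <= 0 /\ 1 <= s) -> 0 < a -> 0 < b ->
  0 <= (k * (a `^ s / a) - k * (b `^ s / b)) * (b - a).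
Proof.
move=> hk a0 b0; rewrite -mulrBr !powR_div_self //.
have [ab|ba] := lerP a b.
- have lab : ln a <= ln b by rewrite ler_ln // posrE.
  have ba0 : 0 <= b - a by rewrite subr_ge0.
  case: hk => [[k0 s1]|[k0 s1]].
  + have : (s - 1) * ln b <= (s - 1) * ln a by nra.
    rewrite -ler_expR => pow_le.
    by apply: mulr_ge0 => //; apply: mulr_ge0 => //; rewrite subr_ge0.
  + have : (s - 1) * ln a <= (s - 1) * ln b by nra.
    rewrite -ler_expR => pow_le.
    by apply: mulr_ge0 => //; apply: mulr_le0 => //; rewrite subr_le0.
- have lab : ln b <= ln a by rewrite ler_ln // ?posrE // ltW.
  have ba0 : b - a <= 0 by rewrite subr_le0 ltW.
  case: hk => [[k0 s1]|[k0 s1]].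
  + have : (s - 1) * ln a <= (s - 1) * ln b by nra.
    rewrite -ler_expR => pow_le.
    by apply: mulr_le0 => //; apply: mulr_ge0_le0 => //; rewrite subr_le0.
  + have : (s - 1) * ln b <= (s - 1) * ln a by nra.
    rewrite -ler_expR => pow_le.
    by apply: mulr_le0 => //; apply: mulr_le0_ge0 => //; rewrite subr_ge0.
Qed.

Lemma mulr_ge0_sharing_factor (x y z : R) :
  0 <= x * z -> 0 <= y * z -> z != 0 -> 0 <= x * y.
Proof.
move=> xz yz z0; have z2 : 0 < z ^+ 2 by rewrite exprn_even_gt0.
have := mulr_ge0 xz yz.
by rewrite mulrACA -expr2 pmulr_lge0.
Qed.

Lemma concave_reaction_ge0 psi (k s a b : R) :
  concave_pos psi -> derive1 psi 1 = 0 -> (forall z, 0 < z -> derivable psi z 1) ->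
  (0 <= k /\ s <= 1 \/ k <= 0 /\ 1 <= s) -> 0 < a -> 0 < b ->
  0 <= derive1 psi (a / b) * (a / b) * (k * (a `^ s / a) - k * (b `^ s / b)).
Proof.
move=> cv d1 dpsi hk a0 b0.
have q0 : 0 < a / b by rewrite divr_gt0.
have [<-|ab] := eqVneq a b; first by rewrite subrr mulr0.
have slope : 0 <= derive1 psi (a / b) * (b - a).
  have -> : b - a = b * (1 - a / b) by field; rewrite gt_eqF.
  rewrite mulrCA; apply: mulr_ge0; first exact: ltW.
  exact: concave_derive1_sign cv d1 (dpsi _ q0) (dpsi _ ltr01) q0.
rewrite mulrAC; apply: mulr_ge0; last exact: ltW.
apply: (mulr_ge0_sharing_factor slope (reaction_rate_sign hk a0 b0)).
by rewrite subr_eq0 eq_sym.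
Qed.

Lemma is_derive_big (I : eqType) (r : seq I) (P : pred I) (h : I -> R -> R)
    (dh : I -> R) (t : R) :
  (forall i, P i -> is_derive t 1 (h i) (dh i)) ->
  is_derive t 1 (fun s => \sum_(i <- r | P i) h i s) (\sum_(i <- r | P i) dh i).
Proof.
move=> hdh; elim: r => [|i r IH].
  under eq_fun do rewrite big_nil.
  by rewrite big_nil; exact: is_derive_cst.
under eq_fun do rewrite big_cons.
rewrite big_cons; case: (boolP (P i)) => Pi //.
exact: is_deriveD (hdh i Pi) IH.
Qed.

Lemma is_derive_mull (f : R -> R) (k t df : R) :
  is_derive t 1 f df -> is_derive t 1 (fun s => k * f s) (k * df).
Proof. by move=> fdf; exact: (is_deriveZ k fdf). Qed.

Lemma is_derive_mul (f g : R -> R) (t df dg : R) :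
  is_derive t 1 f df -> is_derive t 1 g dg ->
  is_derive t 1 (fun s => f s * g s) (f t * dg + g t * df).
Proof. by move=> fdf gdg; exact: (is_deriveM fdf gdg). Qed.

Lemma is_derive_sub (f g : R -> R) (t df dg : R) :
  is_derive t 1 f df -> is_derive t 1 g dg ->
  is_derive t 1 (fun s => f s - g s) (df - dg).
Proof. by move=> fdf gdg; exact: (is_deriveB fdf gdg). Qed.

Lemma is_derive_comp1 psi (q : R -> R) (t dq : R) :
  is_derive t 1 q dq -> derivable psi (q t) 1 ->
  is_derive t 1 (fun s => psi (q s)) (derive1 psi (q t) * dq).
Proof.
by move=> dqt /derivableP dpsi; have := is_derive1_comp dpsi dqt; rewrite derive1E.
Qed.

Lemma is_derive_ratio (f g : R -> R) (t df dg : R) :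
  f t != 0 -> g t != 0 -> is_derive t 1 f df -> is_derive t 1 g dg ->
  is_derive t 1 (fun s => f s / g s) (f t / g t * (df / f t - dg / g t)).
Proof.
move=> f0 g0 fdf gdg.
have ginv : is_derive t 1 (fun s => (g s)^-1) (- (g t) ^- 2 * dg) := is_deriveV g0 gdg.
by apply: is_derive_eq (is_derive_mul fdf ginv) _; field; rewrite ?f0 ?g0.
Qed.

Lemma EVT_max_family (I : finType) (F : I -> R -> R) (a b : R) (i : I) :
  a <= b -> (forall j, {within `[a, b], continuous (F j)}) ->
  exists j0, exists2 t0, t0 \in `[a, b]%R &
    forall j t, t \in `[a, b]%R -> F j t <= F j0 t0.
Proof.
move=> ab cF.
have /choice [tmax htmax] : forall j, exists t0, t0 \in `[a, b]%R /\
    forall t, t \in `[a, b]%R -> F j t <= F j t0.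
  by move=> j; have [t0 t0in t0max] := EVT_max ab (cF j); exists t0; split.
have [j0 _ j0max] := @arg_maxP _ _ I i xpredT (fun j => F j (tmax j)) isT.
have [t0in _] := htmax j0.
exists j0, (tmax j0) => // j t tin.
by apply: le_trans (j0max j isT); apply: (htmax j).2.
Qed.

Lemma riccati_bound (n K s G : R) : 0 < n -> 0 <= K -> 0 < s ->
  s * (2 * n^-1 * G ^+ 2 - 2 * K * G) <= G -> s * G <= n / 2 + K * n * s.
Proof.
move=> n0 K0 s0 ric.
have [G0|G0] := lerP G 0.
  have : s * G <= 0 by rewrite mulr_ge0_le0 // ltW.
  have : 0 <= n / 2 + K * n * s by rewrite addr_ge0 ?divr_ge0 ?mulr_ge0 // ltW.
  lra.
have : s * (2 * n^-1 * G - 2 * K) <= 1.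
  rewrite -(ler_pM2l G0) mulr1.
  by have -> : G * (s * (2 * n^-1 * G - 2 * K)) = s * (2 * n^-1 * G ^+ 2 - 2 * K * G) by ring.
rewrite -(ler_pM2l (_ : 0 < n / 2)) ?divr_gt0 //.
have -> : n / 2 * (s * (2 * n^-1 * G - 2 * K)) = s * G - K * n * s.
  by field; rewrite gt_eqF.
lra.
Qed.

Lemma mulr_le_of_forall_lt (T g b : R) : 0 < T -> 0 <= b ->
  (forall s, 0 < s -> s < T -> s * g <= b) -> T * g <= b.
Proof.
move=> T0 b0 sb.
have [g0|g0] := lerP g 0; first by apply: le_trans _ b0; rewrite mulr_ge0_le0 // ltW.
rewrite leNgt; apply/negP => Tgb.
have bgT : b / g < T by rewrite ltr_pdivrMr // mulrC.
have bg0 : 0 <= b / g by rewrite divr_ge0 // ltW.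
have s0 : 0 < (b / g + T) / 2 by rewrite divr_gt0 //; lra.
have sT : (b / g + T) / 2 < T by lra.
by have := sb _ s0 sT; rewrite -ler_pdivlMr //; lra.
Qed.

End RealAnalysis.

Section Graph.
Variables (R : realType) (V : finType) (adj : rel V) (w : V -> V -> R) (mu : V -> R).
Implicit Types (psi : R -> R) (f g : V -> R) (x : V).

(* Omega_psi psi f is Omega_rate psi f (Lap f / f); along a flow v, the rate
   g is the logarithmic time derivative of v. *)
Definition Omega_rate psi f g x : R :=
  Lap adj w mu (fun y => derive1 psi (f y / f x) * (f y / f x) * (g y - g x)) x.

Lemma Omega_psiE psi f x :
  Omega_psi adj w mu psi f x = Omega_rate psi f (fun y => Lap adj w mu f y / f y) x.
Proof. by []. Qed.

Lemma Omega_rateD psi f g1 g2 x :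
  Omega_rate psi f (fun y => g1 y + g2 y) x = Omega_rate psi f g1 x + Omega_rate psi f g2 x.
Proof.
rewrite /Omega_rate /Lap -mulrDr -big_split /=; congr (_ * _).
by apply: eq_bigr => y _; ring.
Qed.

Lemma Omega_rate_ge0 psi f g x : weighted_graph adj w mu ->
  (forall y, adj x y -> 0 <= derive1 psi (f y / f x) * (f y / f x) * (g y - g x)) ->
  0 <= Omega_rate psi f g x.
Proof.
case=> _ _ _ w_gt0 mu_gt0 summand_ge0.
rewrite /Omega_rate /Lap; apply: mulr_ge0; first by rewrite invr_ge0 ltW.
apply: sumr_ge0 => y xy; apply: mulr_ge0; first exact: ltW (w_gt0 _ _ xy).
by rewrite subrr mulr0 subr0; exact: summand_ge0.
Qed.

Lemma Gamma_psiE psi f x : derive1 psi 1 = 0 ->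
  Gamma_psi adj w mu psi f x = - Lap_psi adj w mu psi f x.
Proof.
move=> d1; rewrite /Gamma_psi /Lap_psi /Lap /psibar d1 -mulrN -sumrN.
by congr (_ * _); apply: eq_bigr => y _; ring.
Qed.

Lemma is_derive_Lap_psi psi (v : V -> R -> R) x (t : R) :
  (forall s, 0 < s -> derivable psi s 1) ->
  (forall y, 0 < v y t) -> (forall y, derivable (v y) t 1) ->
  is_derive t 1 (fun s => Lap_psi adj w mu psi (v^~ s) x)
    (Omega_rate psi (v^~ t) (fun y => derive1 (v y) t / v y t) x).
Proof.
move=> dpsi v_gt0 dv.
have dvy y : is_derive t 1 (v y) (derive1 (v y) t) by rewrite derive1E; exact/derivableP.
have dratio y : is_derive t 1 (fun s => v y s / v x s)
    (v y t / v x t * (derive1 (v y) t / v y t - derive1 (v x) t / v x t)).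
  by apply: is_derive_ratio; rewrite ?gt_eqF.
have dpsi_ratio y : derivable psi (v y t / v x t) 1 by apply: dpsi; rewrite divr_gt0.
rewrite /Lap_psi /Lap /Omega_rate /Lap.
apply: is_derive_mull; apply: is_derive_big => y _; apply: is_derive_mull.
apply: is_derive_sub; rewrite -mulrA.
- exact: is_derive_comp1 (dratio y) (dpsi_ratio y).
- exact: is_derive_comp1 (dratio x) (dpsi_ratio x).
Qed.

Lemma is_derive_Gamma_psi psi (v : V -> R -> R) x (t : R) :
  (forall s, 0 < s -> derivable psi s 1) -> derive1 psi 1 = 0 ->
  (forall y, 0 < v y t) -> (forall y, derivable (v y) t 1) ->
  is_derive t 1 (fun s => Gamma_psi adj w mu psi (v^~ s) x)
    (- Omega_rate psi (v^~ t) (fun y => derive1 (v y) t / v y t) x).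
Proof.
move=> dpsi d1 v_gt0 dv; under eq_fun do rewrite Gamma_psiE //.
exact: is_deriveN (is_derive_Lap_psi x dpsi v_gt0 dv).
Qed.

(* At a spatial maximum of Gamma = - Lap_psi, the term Lap (f Lap_psi f) of
   2 Gamma2 dominates Lap f * Lap_psi f. *)
Lemma Gamma2_psi_le_Omega_at_max psi f x :
  weighted_graph adj w mu -> derive1 psi 1 = 0 -> (forall y, 0 < f y) ->
  (forall y, Gamma_psi adj w mu psi f y <= Gamma_psi adj w mu psi f x) ->
  2 * Gamma2_psi adj w mu psi f x <= Omega_psi adj w mu psi f x.
Proof.
move=> [_ _ _ w_gt0 mu_gt0] d1 f_gt0 Gmax.
set Lp := Lap_psi adj w mu psi f.
have key : Lap adj w mu f x * Lp x <= Lap adj w mu (fun y => f y * Lp y) x.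
  rewrite /Lap -mulrA ler_pM2l ?invr_gt0 // mulr_suml.
  apply: ler_sum => y xy.
  have := Gmax y; rewrite !Gamma_psiE // -/Lp => Lpy.
  have := w_gt0 _ _ xy; have := f_gt0 y => fy wxy.
  by rewrite -mulrA ler_pM2l //; nra.
have fx := f_gt0 x.
have key_div : Lap adj w mu f x * Lp x / f x <= Lap adj w mu (fun y => f y * Lp y) x / f x.
  by rewrite ler_pM2r ?invr_gt0.
by rewrite /Gamma2_psi -/Lp mulrC divfK ?pnatr_eq0 //; lra.
Qed.

End Graph.

Section LiYau.
Variables (R : realType) (V : finType) (adj : rel V) (w : V -> V -> R) (mu : V -> R)
  (psi : R -> R) (n K sigma : R) (c : R -> R) (u : V -> R -> R).
Hypotheses (graph_wG : weighted_graph adj w mu) (n_gt0 : 0 < n) (K_gt0 : 0 < K)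
  (psi_C1 : C1_concave_pos psi) (psi'1 : derive1 psi 1 = 0)
  (CD : CDpsi adj w mu psi n (- K))
  (c_sign : (forall t, 0 <= t -> 0 <= c t) /\ sigma <= 1 \/
            (forall t, 0 <= t -> c t <= 0) /\ 1 <= sigma)
  (u_sol : positive_solution adj w mu c sigma u).

Local Notation Gamma t := (Gamma_psi adj w mu psi (u^~ t)).
Local Notation Omega t := (Omega_psi adj w mu psi (u^~ t)).
Local Notation reaction t :=
  (Omega_rate adj w mu psi (u^~ t) (fun z => c t * (u z t `^ sigma / u z t))).

Lemma u_gt0 (t : R) y : 0 < t -> 0 < u y t.
Proof. by case: u_sol => u_pos _ _ _ _ t0; rewrite u_pos // ltW. Qed.

Lemma is_derive_Gamma_solution y (t : R) : 0 < t ->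
  is_derive t 1 (fun s => Gamma s y) (- (Omega t y + reaction t y)).
Proof.
case: u_sol => _ _ du _ u_eq t0; case: psi_C1 => dpsi _ _.
have rateE : (fun z => derive1 (u z) t / u z t) =
    (fun z => Lap adj w mu (u^~ t) z / u z t + c t * (u z t `^ sigma / u z t)).
  by apply/funext => z; rewrite u_eq // mulrDl mulrA.
rewrite Omega_psiE -Omega_rateD -rateE.
by apply: is_derive_Gamma_psi => // z; [exact: u_gt0 | exact: du].
Qed.

Lemma reaction_ge0 y (t : R) : 0 < t -> 0 <= reaction t y.
Proof.
move=> t0; case: psi_C1 => dpsi _ cv.
apply: Omega_rate_ge0 => // z _.
apply: concave_reaction_ge0; rewrite ?u_gt0 //.
by case: c_sign => [[c0 s1]|[c0 s1]]; [left|right]; split; rewrite // c0 // ltW.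
Qed.

Lemma Omega_ge_at_max y (t : R) : 0 < t ->
  (forall z, Gamma t z <= Gamma t y) ->
  2 * n^-1 * Gamma t y ^+ 2 - 2 * K * Gamma t y <= Omega t y.
Proof.
move=> t0 Gmax.
have u_pos z : 0 < u z t by exact: u_gt0.
have := CD u_pos y; rewrite -[Lap_psi _ _ _ _ _ _]opprK -Gamma_psiE // sqrrN.
have := Gamma2_psi_le_Omega_at_max graph_wG psi'1 u_pos Gmax.
lra.
Qed.

Lemma is_derive_weighted_Gamma y (eps t : R) : 0 < t ->
  is_derive t 1 (fun s => (s - eps) * Gamma s y)
    ((t - eps) * - (Omega t y + reaction t y) + Gamma t y).
Proof.
move=> t0.
have dshift : is_derive t 1 (fun s => s - eps) (1 - 0) :=
  is_deriveB (is_derive_id t 1) (is_derive_cst eps t 1).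
by have := is_derive_mul dshift (is_derive_Gamma_solution y t0); rewrite subr0 mulr1.
Qed.

Lemma weighted_Gamma_le_at_max y0 (eps t0 : R) : 0 < eps -> eps < t0 ->
  (forall y t, eps <= t <= t0 -> (t - eps) * Gamma t y <= (t0 - eps) * Gamma t0 y0) ->
  (t0 - eps) * Gamma t0 y0 <= n / 2 + K * n * (t0 - eps).
Proof.
move=> eps0 eps_t0 Fmax.
have t0_gt0 : 0 < t0 := lt_trans eps0 eps_t0.
have s_gt0 : 0 < t0 - eps by rewrite subr_gt0.
have Gmax z : Gamma t0 z <= Gamma t0 y0.
  by rewrite -(ler_pM2l s_gt0); apply: Fmax; rewrite lexx ltW.
have time_max : 0 <= (t0 - eps) * - (Omega t0 y0 + reaction t0 y0) + Gamma t0 y0.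
  exact: is_derive_ge0_at_left_max (is_derive_weighted_Gamma y0 eps t0_gt0) eps_t0 (Fmax y0).
have := Omega_ge_at_max t0_gt0 Gmax.
have := reaction_ge0 y0 t0_gt0.
move: time_max.
set G := Gamma t0 y0; set O := Omega t0 y0; set Q := reaction t0 y0 => time_max Q0 OG.
have sOG : (t0 - eps) * (2 * n^-1 * G ^+ 2 - 2 * K * G) <= (t0 - eps) * O.
  by rewrite ler_pM2l.
have sQ : 0 <= (t0 - eps) * Q by rewrite mulr_ge0 // ltW.
have ric : (t0 - eps) * (2 * n^-1 * G ^+ 2 - 2 * K * G) <= G by lra.
exact: riccati_bound n_gt0 (ltW K_gt0) s_gt0 ric.
Qed.

Lemma Gamma_weighted_bound x (eps T : R) : 0 < eps -> eps < T ->
  (T - eps) * Gamma T x <= n / 2 + K * n * (T - eps).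
Proof.
move=> eps0 epsT.
pose F y t := (t - eps) * Gamma t y.
have [y0 [t0 t0in Fmax]] : exists y0, exists2 t0, t0 \in `[eps, T]%R &
    forall y t, t \in `[eps, T]%R -> F y t <= F y0 t0.
  apply: EVT_max_family x (ltW epsT) _ => y.
  apply: derivable_within_continuous => t; rewrite in_itv /= => /andP [et _].
  by case: (is_derive_weighted_Gamma y eps (lt_le_trans eps0 et)).
apply: le_trans (Fmax x T _) _; first by rewrite in_itv /= lexx ltW.
move: t0in; rewrite in_itv /= => /andP [et0 t0T].
have [<-|t0_neq] := eqVneq eps t0.
  have KnT : 0 < K * n * (T - eps) by rewrite !mulr_gt0 // subr_gt0.
  have n2 : 0 < n / 2 by rewrite divr_gt0.
  by rewrite /F subrr mul0r; lra.
have eps_t0 : eps < t0 by rewrite lt_def eq_sym t0_neq.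
apply: le_trans (weighted_Gamma_le_at_max eps0 eps_t0 _) _.
  by move=> y t /andP [et tt0]; apply: Fmax; rewrite in_itv /= et (le_trans tt0).
by rewrite lerD2l ler_pM2l ?mulr_gt0 // lerD2r.
Qed.

End LiYau.

Theorem mainTheorem13 (R : realType) (V : finType) (adj : rel V)
  (w : V -> V -> R) (mu : V -> R) (psi : R -> R) (n K sigma : R)
  (c : R -> R) (u : V -> R -> R) :
  weighted_graph adj w mu ->
  0 < n -> 0 < K ->
  C1_concave_pos psi -> derive1 psi 1 = 0 ->
  CDpsi adj w mu psi n (- K) ->
  {within `[0, +oo[, continuous c} ->
  ((forall t, 0 <= t -> 0 <= c t) /\ sigma <= 1 \/
   (forall t, 0 <= t -> c t <= 0) /\ 1 <= sigma) ->
  positive_solution adj w mu c sigma u ->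
  forall (x : V) (t : R), 0 < t ->
    Gamma_psi adj w mu psi (fun y => u y t) x <= n / (2 * t) + K * n.
Proof.
move=> graph_wG n_gt0 K_gt0 psi_C1 psi'1 CD _ c_sign u_sol x t t_gt0.
set G := Gamma_psi _ _ _ _ _ x.
have bound : t * (G - K * n) <= n / 2.
  apply: mulr_le_of_forall_lt => // [|s s0 st]; first by rewrite divr_ge0 // ltW.
  have ts_gt0 : 0 < t - s by rewrite subr_gt0.
  have ts_lt : t - s < t by lra.
  have := Gamma_weighted_bound graph_wG n_gt0 K_gt0 psi_C1 psi'1 CD c_sign u_sol x ts_gt0 ts_lt.
  by rewrite -/G; lra.
by rewrite -lerBlDr ler_pdivlMr ?mulr_gt0 //; lra.
Qed.
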